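(* Let $\mathcal F=\{g\}\cup\{f_p:p\text{ prime}\}$, where $g$ and $f_p$ are the implicit operations of $\mathsf{RCR}$ defined by $\mathsf{inv}(x,y)=(x^2y\approx x)\wedge(xy^2\approx y)$ and $\exists\mathsf{root}_p(x,y)=\exists z\,(\mathsf{inv}(p,z)\wedge y^p\approx(1-zp)x)$ respectively. Then the pp expansion of $\mathsf{RCR}$ induced by $\mathcal F$ is simple and coincides with $\mathsf{ICM}=\mathsf{RCR}[\mathscr L_{\mathcal F}]$ (identifying the new symbol for $g$ with $(\,)^*$ and that for $f_p$ with $r_p$).
   Context: Rings are unital in the language $\{+,\cdot,-,0,1\}$; $\mathsf{RCR}$ is the quasivariety of reduced commutative rings. A field is weakly rooted if it has characteristic $0$, or prime characteristic $p$ with every element having a $p$-th root. Weak inverse: $a^*=a^{-1}$ if $a\ne0$, $0^*=0$; weak $p$-root: $r_p(a)=\sqrt[p]{a}$ if characteristic is $p$, else $0$. An implicitly closed field is a weakly rooted field expanded by $(\,)^*$ and all $r_p$; $\mathsf{ICM}$ is the class of algebras isomorphic to subalgebras of direct products of implicitly closed fields. An implicit operation $f$ of $\mathsf{RCR}$ defined by a formula $\varphi(\vec x,y)$ is a family of partial functions $f^{\mathbf A}$ ($\mathbf A\in\mathsf{RCR}$) with $\mathbf A\models\varphi(\vec a,b)$ iff $\vec a\in\mathrm{dom} f^{\mathbf A}$ and $f^{\mathbf A}(\vec a)=b$. For a set $\mathcal F$ of pp definable extendable implicit operations of a quasivariety $\mathsf K$, $\mathscr L_{\mathcal F}$ adds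 a new $n$-ary symbol for each $n$-ary $f\in\mathcal F$; $\mathsf K[\mathscr L_{\mathcal F}]$ is the class of expansions of those $\mathbf A\in\mathsf K$ in which all $f^{\mathbf A}$ ($f\in\mathcal F$) are total, interpreting the new symbols as $f^{\mathbf A}$; the pp expansion induced by $\mathcal F$ is the class of subalgebras of members of $\mathsf K[\mathscr L_{\mathcal F}]$, and it is simple if it equals $\mathsf K[\mathscr L_{\mathcal F}]$. *)

From mathcomp Require Import all_boot.

Definition primeIdx := {p : nat | prime p}.

Record LFAlg := {
  car :> Type;
  add : car -> car -> car;
  mul : car -> car -> car;
  opp : car -> car;
  zero : car;
  one : car;
  star : car -> car;
  rt : primeIdx -> car -> car
}.

Section Ops.
Variable A : LFAlg.

Fixpoint natA (n : nat) : A :=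
  match n with 0 => zero A | S m => add A (one A) (natA m) end.

Fixpoint powA (y : A) (n : nat) : A :=
  match n with 0 => one A | S m => mul A y (powA y m) end.

Definition isComRing : Prop :=
  (forall x y z, add A x (add A y z) = add A (add A x y) z) /\
  (forall x y, add A x y = add A y x) /\
  (forall x, add A (zero A) x = x) /\
  (forall x, add A (opp A x) x = zero A) /\
  (forall x y z, mul A x (mul A y z) = mul A (mul A x y) z) /\
  (forall x y, mul A x y = mul A y x) /\
  (forall x, mul A (one A) x = x) /\
  (forall x y z, mul A x (add A y z) = add A (mul A x y) (mul A x z)).

Definition isRCR : Prop :=
  isComRing /\ forall (x : A) (n : nat), powA x n = zero A -> x = zero A.

Definition invF (x y : A) : Prop :=
  mul A (mul A x x) y = x /\ mul A x (mul A y y) = y.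

Definition exrootF (p : nat) (x y : A) : Prop :=
  exists z, invF (natA p) z /\
    powA y p = mul A (add A (one A) (opp A (mul A z (natA p)))) x.

(* Membership in RCR[L_F]: the reduct is in RCR, the implicit operations
   g and f_p are total on it, and the new symbols are interpreted as them:
   A |= phi(a,b) iff the operation at a equals b. *)
Definition inRCR_LF : Prop :=
  isRCR /\
  (forall a b : A, invF a b <-> star A a = b) /\
  (forall (p : primeIdx) (a b : A), exrootF (sval p) a b <-> rt A p a = b).

Definition isField : Prop :=
  isComRing /\ one A <> zero A /\
  forall x : A, x <> zero A -> exists y, mul A x y = one A.

Definition charZero : Prop := forall n, 0 < n -> natA n <> zero A.

Definition charP (p : nat) : Prop := natA p = zero A.

Definition weaklyRooted : Prop :=
  charZero \/
  exists p : primeIdx, charP (sval p) /\ forall a : A, exists b, powA b (sval p) = a.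

Definition isICField : Prop :=
  isField /\ weaklyRooted /\
  (forall a : A, a <> zero A -> mul A a (star A a) = one A) /\
  star A (zero A) = zero A /\
  (forall (p : primeIdx) (a : A),
     (charP (sval p) -> powA (rt A p a) (sval p) = a) /\
     (~ charP (sval p) -> rt A p a = zero A)).

End Ops.

Set Implicit Arguments.
Unset Strict Implicit.
Unset Printing Implicit Defensive.

Definition isHom (A B : LFAlg) (h : A -> B) : Prop :=
  (forall x y, h (add A x y) = add B (h x) (h y)) /\
  (forall x y, h (mul A x y) = mul B (h x) (h y)) /\
  (forall x, h (opp A x) = opp B (h x)) /\
  h (zero A) = zero B /\ h (one A) = one B /\
  (forall x, h (star A x) = star B (h x)) /\
  (forall p x, h (rt A p x) = rt B p (h x)).

Definition isEmb (A B : LFAlg) (h : A -> B) : Prop :=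
  isHom h /\ forall x y, h x = h y -> x = y.

Definition prodLF (I : Type) (F : I -> LFAlg) : LFAlg := {|
  car := forall i, F i;
  add := fun x y i => add (F i) (x i) (y i);
  mul := fun x y i => mul (F i) (x i) (y i);
  opp := fun x i => opp (F i) (x i);
  zero := fun i => zero (F i);
  one := fun i => one (F i);
  star := fun x i => star (F i) (x i);
  rt := fun p x i => rt (F i) p (x i) |}.

(* the pp expansion of RCR induced by F: subalgebras (up to iso) of members
   of RCR[L_F] *)
Definition inPPExp (A : LFAlg) : Prop :=
  exists (B : LFAlg) (h : A -> B), inRCR_LF B /\ isEmb h.

Definition inICM (A : LFAlg) : Prop :=
  exists (I : Type) (F : I -> LFAlg) (h : A -> prodLF F),
    (forall i, isICField (F i)) /\ isEmb h.

(* RCR[L_F] is closed under subalgebras and products: once the defining formulas are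
   put in the closed forms [a* = b] and [b^p = (1 - p* p) a], they are preserved and
   reflected by every jointly injective family of homomorphisms. Implicitly closed
   fields lie in RCR[L_F] because in a field [y^p = (1 - p^-1 p) a] has at most one
   solution: the Frobenius map is injective in characteristic p, and the right-hand
   side vanishes otherwise.
   Conversely, [a a a* = a] makes every A in RCR[L_F] von Neumann regular. For
   [d <> 0], an ideal maximal among those avoiding the idempotent [d d*] is prime, so it
   contains [1 - x x*] whenever it misses [x], the two having product [0]. The quotient
   is then a field with inverse induced by [( )*], made implicitly closed by the induced
   [r_p], and these quotients separate the points of A. *)

From Pilot Require Import Defs.
From HB Require Import structures.
From mathcomp Require Import all_boot all_algebra.
From mathcomp Require Import boolp classical_sets.
From mathcomp Require Import ring.
(* the libraries above shadow the names [add], [mul], [zero] and [one] of Defs *)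
Import Defs.

Set Implicit Arguments.
Unset Strict Implicit.
Unset Printing Implicit Defensive.

Import GRing.Theory.
Local Open Scope ring_scope.
Local Open Scope quotient_scope.
Local Open Scope classical_set_scope.

Section Homomorphism.
Variables (A B : LFAlg) (h : A -> B) (hh : isHom h).

Lemma homD x y : h (add A x y) = add B (h x) (h y). Proof. by case: hh. Qed.
Lemma homM x y : h (mul A x y) = mul B (h x) (h y). Proof. by case: hh => _ []. Qed.
Lemma homN x : h (opp A x) = opp B (h x). Proof. by case: hh => _ [] _ []. Qed.
Lemma hom0 : h (zero A) = zero B. Proof. by case: hh => _ [] _ [] _ []. Qed.
Lemma hom1 : h (one A) = one B. Proof. by case: hh => _ [] _ [] _ [] _ []. Qed.
Lemma hom_star x : h (star A x) = star B (h x).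
Proof. by case: hh => _ [] _ [] _ [] _ [] _ []. Qed.
Lemma hom_rt p x : h (rt A p x) = rt B p (h x).
Proof. by case: hh => _ [] _ [] _ [] _ [] _ [] _. Qed.

Lemma hom_nat n : h (natA A n) = natA B n.
Proof. by elim: n => [|n IHn] /=; rewrite ?hom0 // homD hom1 IHn. Qed.

Lemma hom_pow x n : h (powA A x n) = powA B (h x) n.
Proof. by elim: n => [|n IHn] /=; rewrite ?hom1 // homM IHn. Qed.

End Homomorphism.

Local Notation homE hh := (homD hh, homM hh, homN hh, hom0 hh, hom1 hh,
  hom_star hh, hom_rt hh, hom_nat hh, hom_pow hh).

Lemma isHom_comp (A B C : LFAlg) (g : B -> C) (h : A -> B) :
  isHom g -> isHom h -> isHom (g \o h).
Proof.
by move=> hg hh; do !split=> * /=; rewrite ?(homE hh) ?(homE hg).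
Qed.

Lemma isHom_proj (I : Type) (F : I -> LFAlg) (i : I) :
  isHom (fun x : prodLF F => x i).
Proof. by []. Qed.

Lemma isHom_tuple (A : LFAlg) (I : Type) (F : I -> LFAlg) (h : forall i, A -> F i) :
  (forall i, isHom (h i)) -> isHom (fun a => (fun i => h i a) : prodLF F).
Proof.
move=> hh; do !split=> *; apply: functional_extensionality_dep => i /=;
by rewrite ?(homE (hh i)).
Qed.

(* [1 - p* p], which is [1] where [p = 0] and [0] where [p] is invertible *)
Definition charIdem (A : LFAlg) (p : nat) : A :=
  add A (one A) (opp A (mul A (star A (natA A p)) (natA A p))).

Lemma exrootF_charIdem (A : LFAlg) :
    (forall a b : A, invF A a b <-> star A a = b) ->
  forall p (a b : A), exrootF A p a b <-> powA A b p = mul A (charIdem A p) a.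
Proof.
move=> starP p a b; split=> [[z [/starP <- //]]|e].
by exists (star A (natA A p)); split=> //; apply/starP.
Qed.

Section SeparatingFamily.
Variables (A : LFAlg) (I : Type) (B : I -> LFAlg) (h : forall i, A -> B i).
Hypothesis hom_h : forall i, isHom (h i).
Hypothesis h_sep : forall x y, (forall i, h i x = h i y) -> x = y.
Hypothesis B_RCR : forall i, inRCR_LF (B i).

Let eq_sep (x y : A) : x = y <-> forall i, h i x = h i y.
Proof. by split=> [-> //|/h_sep]. Qed.

Lemma isComRing_sep : isComRing A.
Proof.
do !split=> *; apply/eq_sep => i; rewrite !(homE (hom_h i));
have [[[aA [aC [a0 [aN [mA [mC [m1 mD]]]]]]] _] _] := B_RCR i;
by [apply: aA | apply: aC | apply: a0 | apply: aN | apply: mA | apply: mC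
   | apply: m1 | apply: mD].
Qed.

Lemma reduced_sep (x : A) n : powA A x n = zero A -> x = zero A.
Proof.
move=> xn0; apply/eq_sep => i; rewrite (hom0 (hom_h i)).
by apply: (proj2 (proj1 (B_RCR i)) _ n); rewrite -(hom_pow (hom_h i)) xn0 hom0.
Qed.

Lemma star_sep (a b : A) : invF A a b <-> star A a = b.
Proof.
have -> : invF A a b <-> forall i, invF (B i) (h i a) (h i b).
  rewrite /invF !eq_sep; split=> [[e1 e2] i | e].
    by rewrite -!(homM (hom_h i)) e1 e2.
  by split=> i; have [e1 e2] := e i; rewrite !(homM (hom_h i)).
rewrite eq_sep; split=> e i; have starP := proj1 (proj2 (B_RCR i)).
  by rewrite (hom_star (hom_h i)); apply/starP.
by apply/starP; rewrite -(hom_star (hom_h i)).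
Qed.

Lemma rt_sep p (a b : A) : exrootF A (sval p) a b <-> rt A p a = b.
Proof.
rewrite exrootF_charIdem; last exact: star_sep.
rewrite !eq_sep; split=> e i; have [_ [starP rtP]] := B_RCR i.
  rewrite (hom_rt (hom_h i)); apply/rtP/exrootF_charIdem => //.
  by move: (e i); rewrite /charIdem !(homE (hom_h i)).
rewrite /charIdem !(homE (hom_h i)); apply/(exrootF_charIdem starP)/rtP.
by rewrite -(hom_rt (hom_h i)).
Qed.

Lemma inRCR_LF_sep : inRCR_LF A.
Proof.
split; first by split; [exact: isComRing_sep | exact: reduced_sep].
by split; [exact: star_sep | exact: rt_sep].
Qed.

End SeparatingFamily.

Definition ringOf (A : LFAlg) of isComRing A : Type := A.

Section RingOf.
Variables (A : LFAlg) (HA : isComRing A).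

HB.instance Definition _ := gen_eqMixin (ringOf HA).
HB.instance Definition _ := gen_choiceMixin (ringOf HA).

Let addA : associative (add A). Proof. by case: HA. Qed.
Let addC : commutative (add A). Proof. by case: HA => _ []. Qed.
Let add0 : left_id (zero A) (add A). Proof. by case: HA => _ [] _ []. Qed.
Let addN : left_inverse (zero A) (opp A) (add A).
Proof. by case: HA => _ [] _ [] _ []. Qed.
HB.instance Definition _ := GRing.isZmodule.Build (ringOf HA) addA addC add0 addN.

Let mulA : associative (mul A). Proof. by case: HA => _ [] _ [] _ [] _ []. Qed.
Let mulC : commutative (mul A). Proof. by case: HA => _ [] _ [] _ [] _ [] _ []. Qed.
Let mul1 : left_id (one A) (mul A).
Proof. by case: HA => _ [] _ [] _ [] _ [] _ [] _ []. Qed.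
Let mulDl : left_distributive (mul A) (add A).
Proof.
by case: HA => _ [] _ [] _ [] _ [] _ [] mC [] _ mD x y z; rewrite mC mD !(mC z).
Qed.
HB.instance Definition _ :=
  GRing.Zmodule_isComPzRing.Build (ringOf HA) mulA mulC mul1 mulDl.

Lemma natA_ringOf n : natA A n = n%:R :> ringOf HA.
Proof. by elim: n => //= n ->; rewrite mulrS. Qed.

Lemma powA_ringOf (x : ringOf HA) n : powA A x n = x ^+ n.
Proof. by elim: n => //= n ->; rewrite exprS. Qed.

End RingOf.

Definition ringLF (R : comPzRingType) (s : R -> R) (r : primeIdx -> R -> R) : LFAlg :=
  {| car := R; add := +%R; mul := *%R; opp := -%R; zero := 0; one := 1;
     star := s; rt := r |}.

Section RingLF.
Variables (R : comPzRingType) (s : R -> R) (r : primeIdx -> R -> R).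

Lemma ringLF_isComRing : isComRing (ringLF s r).
Proof.
by do !split=> *; [apply: addrA | apply: addrC | apply: add0r | apply: addNr
  | apply: mulrA | apply: mulrC | apply: mul1r | apply: mulrDr].
Qed.

Lemma natA_ringLF n : natA (ringLF s r) n = n%:R.
Proof. by elim: n => //= n ->; rewrite mulrS. Qed.

Lemma powA_ringLF (x : R) n : powA (ringLF s r) x n = x ^+ n.
Proof. by elim: n => //= n ->; rewrite exprS. Qed.

End RingLF.

Lemma weak_invP (K : fieldType) (a b : K) :
  a * a * b = a /\ a * (b * b) = b <-> a^-1 = b.
Proof.
have [->|a0] := eqVneq a 0; first by rewrite invr0 !mul0r; split=> [[_ <-]|<-].
split=> [[e _]|<-]; last by rewrite mulfK // mulrA divff // mul1r.
have ab1 : a * b = 1 by apply: (mulfI a0); rewrite mulr1 mulrA.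
by rewrite -[a^-1]mulr1 -ab1 mulrA mulVf // mul1r.
Qed.

Lemma expf_pchar_inj (K : fieldType) p :
  p \in [pchar K] -> injective (fun x : K => x ^+ p).
Proof.
move=> pK x y /eqP; rewrite -subr_eq0 -!(pFrobenius_autE pK).
rewrite -pFrobenius_autB_comm; last exact: mulrC.
by rewrite pFrobenius_autE expf_eq0 subr_eq0 => /andP[_ /eqP].
Qed.

Lemma charIdem_field (K : fieldType) n :
  1 - n%:R^-1 * n%:R = (n%:R == 0 :> K)%:R :> K.
Proof.
have [->|n0] := eqVneq (n%:R : K) 0; first by rewrite invr0 mul0r subr0.
by rewrite mulVf // subrr.
Qed.

Lemma weak_root_unique (K : fieldType) p (a x y : K) : prime p ->
    x ^+ p = (1 - p%:R^-1 * p%:R) * a -> y ^+ p = (1 - p%:R^-1 * p%:R) * a ->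
  x = y.
Proof.
rewrite charIdem_field => p_pr; have [p0|p0] := eqVneq (p%:R : K) 0.
  have pK : p \in [pchar K] by apply/andP; split; last exact/eqP.
  by rewrite mulr1n mul1r => xa ya; apply: (expf_pchar_inj pK); rewrite /= xa ya.
rewrite mulr0n mul0r => /eqP + /eqP; rewrite !expf_eq0 prime_gt0 //=.
by move=> /eqP -> /eqP ->.
Qed.

Lemma ringLF_ICField (K : fieldType) (rt : primeIdx -> K -> K) :
    (forall p x, rt p x ^+ sval p = (1 - (sval p)%:R^-1 * (sval p)%:R) * x) ->
  isICField (ringLF (@GRing.inv K) rt).
Proof.
move=> rt_root; have natE := natA_ringLF (@GRing.inv K) rt.
split; [split; [exact: ringLF_isComRing | split] | split].
- exact/eqP/oner_neq0.
- by move=> x /eqP x0; exists x^-1; apply: mulfV.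
- have [[n [n_gt0 /eqP n0]]|c0] := pselect (exists n, (0 < n)%N /\ n%:R = 0 :> K).
    have [p pK] := natf0_pchar n_gt0 n0; pose p' := exist prime p (pcharf_prime pK).
    right; exists p'; split=> [|a]; first by rewrite /charP natE (pcharf0 pK).
    exists (rt p' a); rewrite powA_ringLF rt_root charIdem_field /=.
    by rewrite (pcharf0 pK) eqxx mulr1n mul1r.
  by left=> n n_gt0; rewrite natE => n0; apply: c0; exists n.
split; first by move=> a /eqP a0; apply: mulfV.
split=> [|p a]; first exact: invr0.
rewrite /charP natE powA_ringLF; have := rt_root p a; rewrite charIdem_field.
have [->|p0] := eqVneq ((sval p)%:R : K) 0.
  by rewrite mulr1n mul1r => ra; split=> // /(_ erefl).
rewrite mulr0n mul0r => /eqP; rewrite expf_eq0 => /andP[_ /eqP ra0].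
by split=> // /eqP; rewrite (negbTE p0).
Qed.

Definition fieldOf (F : LFAlg) (HF : isICField F) : Type := ringOf (proj1 (proj1 HF)).

Section ImplicitlyClosedField.
Variables (F : LFAlg) (HF : isICField F).
Local Notation K := (fieldOf HF).

HB.instance Definition _ := GRing.ComPzRing.on K.

Let one_neq0 : (1 : K) != 0. Proof. exact/eqP/(proj1 (proj2 (proj1 HF))). Qed.
HB.instance Definition _ := GRing.PzSemiRing_isNonZero.Build K one_neq0.

Let mulVstar (x : K) : x != 0 -> (star F x : K) * x = 1.
Proof.
have [_ [_ [mul_star _]]] := HF.
by move=> /eqP x0; rewrite mulrC; apply: mul_star.
Qed.
Let star0 : star F (0 : K) = 0 :> K. Proof. by have [_ [_ [_ []]]] := HF. Qed.
HB.instance Definition _ := GRing.ComNzRing_isField.Build K mulVstar star0.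

Let natK n : natA F n = n%:R :> K := @natA_ringOf F _ n.
Let powK (x : K) n : powA F x n = x ^+ n := @powA_ringOf F _ x n.

Lemma rt_weak_root p (a : K) :
  (rt F p a : K) ^+ sval p = (1 - (sval p)%:R^-1 * (sval p)%:R) * a.
Proof.
have [_ [_ [_ [_ rtP]]]] := HF; have [rt_char rt_nchar] := rtP p a.
rewrite charIdem_field; have [p0|p0] := eqVneq ((sval p)%:R : K) 0.
  by rewrite mulr1n mul1r -powK rt_char // /charP natK p0.
rewrite mulr0n mul0r rt_nchar; last by move/eqP: p0; rewrite /charP natK.
by apply/eqP; rewrite expf_eq0 (prime_gt0 (svalP p)) eqxx.
Qed.

Lemma inRCR_LF_ICField : inRCR_LF F.
Proof.
have starP (a b : F) : invF F a b <-> star F a = b := weak_invP (a : K) b.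
split; first split; [exact: (proj1 (proj1 HF)) | | split=> // p a b].
  move=> x n; rewrite powK; change ((x : K) ^+ n = 0 -> (x : K) = 0).
  by move/eqP; rewrite expf_eq0 => /andP[_ /eqP].
rewrite exrootF_charIdem // powK /charIdem natK.
split=> [|<-]; last exact: rt_weak_root.
exact: weak_root_unique (svalP p) (rt_weak_root p a).
Qed.

End ImplicitlyClosedField.

Definition ideal_avoiding (R : comPzRingType) (e : R) (X : set R) : Prop :=
  [/\ forall x y, X x -> X y -> X (x + y), forall r x, X x -> X (r * x) & ~ X e].

Lemma exists_maximal_ideal_avoiding (R : comPzRingType) (e : R) :
  exists X, ideal_avoiding e X /\ forall Y, X `<` Y -> ~ ideal_avoiding e Y.
Proof.
apply: Zorn_bigcup => F FP Ftot; split.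
- move=> x y [X FX Xx] [Y FY Yy]; have [XY|YX] := Ftot X Y FX FY.
    by exists Y => //; have [D _ _] := FP Y FY; apply: D => //; apply: XY.
  by exists X => //; have [D _ _] := FP X FX; apply: D => //; apply: YX.
- by move=> r x [X FX Xx]; exists X => //; have [_ M _] := FP X FX; apply: M.
- by case=> X FX; have [_ _] := FP X FX.
Qed.

Section MaximalIdealAvoiding.
Variables (R : comPzRingType) (e : R) (X : set R).
Hypotheses (e_neq0 : e != 0) (HX : ideal_avoiding e X).
Hypothesis X_max : forall Y, X `<` Y -> ~ ideal_avoiding e Y.

Lemma max_avoiding0 : X 0.
Proof.
have [//|nX0] := pselect (X 0); have [XD XM Xe] := HX; exfalso.
apply: (X_max (Y := fun x => X x \/ x = 0)).
  by split=> [x|sub]; [left | apply: nX0; apply: sub; right].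
split=> [x y [Xx|->] [Xy|->] | t x [Xx|->] | [//|/eqP]].
- by left; apply: XD.
- by rewrite addr0; left.
- by rewrite add0r; left.
- by rewrite addr0; right.
- by left; apply: XM.
- by rewrite mulr0; right.
- exact/negP.
Qed.

Lemma max_avoiding_span x : ~ X x -> exists a t, X a /\ e = a + t * x.
Proof.
move=> nXx; have [XD XM Xe] := HX; have X0 := max_avoiding0.
have [//|nspan] := pselect (exists a t, X a /\ e = a + t * x); exfalso.
apply: (X_max (Y := fun y => exists a t, X a /\ y = a + t * x)).
  split=> [y Xy|sub]; first by exists y, 0; rewrite mul0r addr0.
  by apply: nXx; apply: sub; exists 0, 1; rewrite mul1r add0r.
split=> [y z [a [t [Xa ->]]] [b [u [Xb ->]]] | v y [a [t [Xa ->]]] | //].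
  by exists (a + b), (t + u); split; [apply: XD | ring].
by exists (v * a), (v * t); split; [apply: XM | ring].
Qed.

Lemma max_avoiding_prime x y : e * e = e -> X (x * y) -> X x \/ X y.
Proof.
move=> ee Xxy; have [XD XM Xe] := HX.
have [Xx|nXx] := pselect (X x); first by left.
have [Xy|nXy] := pselect (X y); first by right.
have [a [t [Xa ea]]] := max_avoiding_span nXx.
have [b [u [Xb eb]]] := max_avoiding_span nXy.
exfalso; apply: Xe; rewrite -ee {1}ea eb.
have -> : (a + t * x) * (b + u * y)
          = (b + u * y) * a + t * x * b + t * u * (x * y) by ring.
by apply: (XD); first apply: (XD); apply: XM.
Qed.

End MaximalIdealAvoiding.

(* By [ideal_inv], [s] is an inverse modulo [J], so [J] is a maximal ideal. *)
Record maxIdeal (R : comPzRingType) (s : R -> R) (J : set R) : Prop := {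
  ideal0 : J 0;
  idealD : forall x y, J x -> J y -> J (x + y);
  idealM : forall r x, J x -> J (r * x);
  ideal1 : ~ J 1;
  ideal_inv : forall x, ~ J x -> J (1 - x * s x) }.

Section RegularRing.
Variables (R : comPzRingType) (s : R -> R) (r : primeIdx -> R -> R).
Hypothesis mulsK : forall a, a * a * s a = a.
Hypothesis s_weak_inv : forall a, a * (s a * s a) = s a.
Hypothesis r_root :
  forall p a, r p a ^+ sval p = (1 - s (sval p)%:R * (sval p)%:R) * a.

Lemma exists_maxIdeal (d : R) : d != 0 -> exists J, maxIdeal s J /\ ~ J d.
Proof.
move=> d0; have ee : d * s d * (d * s d) = d * s d.
  by rewrite mulrA -(mulrA d) (mulrC (s d)) mulrA mulsK.
have e0 : d * s d != 0.
  by apply: contraNneq d0 => e0; rewrite -[d]mulsK -mulrA e0 mulr0.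
have [X [HX X_max]] := exists_maximal_ideal_avoiding (d * s d).
have [XD XM Xe] := HX; have X0 := max_avoiding0 e0 HX X_max.
exists X; split; last by move=> Xd; apply: Xe; rewrite mulrC; apply: XM.
split=> // [X1|x nXx]; first by apply: Xe; rewrite -[_ * _]mulr1; apply: XM.
have := max_avoiding_prime e0 HX X_max (x := x) (y := 1 - x * s x) ee.
by rewrite mulrBr mulr1 mulrA mulsK subrr => /(_ X0) [].
Qed.

Section Quotient.
Variables (J : set R) (HJ : maxIdeal s J).

Lemma ideal_s x : J x -> J (s x).
Proof. by move=> Jx; rewrite -s_weak_inv mulrC; apply: (idealM HJ). Qed.

(* [{ideal_quot _}] needs a nonzero ring, and [R] is one as it has a proper ideal. *)
Definition nzRing of maxIdeal s J : Type := R.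
Local Notation Rnz := (nzRing HJ).
HB.instance Definition _ := GRing.ComPzRing.on Rnz.

Let one_neq0 : (1 : Rnz) != 0.
Proof. by apply/eqP => e10; apply: (ideal1 HJ); rewrite e10; apply: (ideal0 HJ). Qed.
HB.instance Definition _ := GRing.PzSemiRing_isNonZero.Build Rnz one_neq0.

Definition idealOf : pred Rnz := fun x => `[< J x >].

Lemma idealOf_closed : idealr_closed idealOf.
Proof.
split; [exact/asboolP/(ideal0 HJ) | exact/asboolP/(ideal1 HJ) | ].
move=> a u v /asboolP Ju /asboolP Jv; apply/asboolP.
by apply: (idealD HJ) => //; apply: (idealM HJ).
Qed.
HB.instance Definition _ := isIdealr.Build Rnz idealOf idealOf_closed.

Definition quot := {ideal_quot (idealOf : idealr Rnz)}.
HB.instance Definition _ := GRing.ComNzRing.on quot.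

(* the cast exposes the field structure of [quot], not found on [Quotient.sort quot] *)
Local Notation pi := (\pi_quot : R -> quot).

Lemma quot_eqP (x y : R) : pi x = pi y <-> J (x - y).
Proof.
split=> [/eqP|Jxy]; first by rewrite -Quotient.idealrBE => /asboolP.
by apply/eqP; rewrite -Quotient.idealrBE; apply/asboolP.
Qed.

Lemma quot_eq0 (x : R) : pi x = 0 <-> J x.
Proof. by rewrite -(rmorph0 \pi_quot) quot_eqP subr0. Qed.

Lemma pi_mulsV a : ~ J a -> pi (s a) * pi a = 1.
Proof.
move=> nJa; rewrite -rmorphM -(rmorph1 \pi_quot); apply/quot_eqP.
have -> : s a * a - 1 = -1 * (1 - a * s a) by ring.
by apply: (idealM HJ); apply: (ideal_inv HJ).
Qed.

Definition invQ := lift_op1 quot s.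

Let mulVQ (x : quot) : x != 0 -> invQ x * x = 1.
Proof.
rewrite /invQ -lock; have := reprK x; move: (repr x) => a <- a0.
by apply: pi_mulsV => /quot_eq0 pa0; rewrite pa0 eqxx in a0.
Qed.

Let invQ0 : invQ 0 = 0.
Proof. by rewrite /invQ -lock; apply/quot_eq0/ideal_s/quot_eq0; rewrite reprK. Qed.

HB.instance Definition _ := GRing.ComNzRing_isField.Build quot mulVQ invQ0.

Lemma pi_s a : pi (s a) = (pi a)^-1.
Proof.
have [Ja|nJa] := pselect (J a).
  by rewrite (proj2 (quot_eq0 a) Ja) invr0; apply/quot_eq0/ideal_s.
have pa0 : pi a != 0 by apply/eqP => /quot_eq0.
by rewrite -[LHS](mulfK pa0) pi_mulsV // mul1r.
Qed.

Definition rtQ p := lift_op1 quot (r p).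

Lemma pi_r_root p a :
  pi (r p a) ^+ sval p = (1 - (sval p)%:R^-1 * (sval p)%:R) * pi a.
Proof.
have -> : (sval p)%:R^-1 = pi (s (sval p)%:R) by rewrite pi_s rmorph_nat.
by rewrite -rmorphXn r_root rmorphM rmorphB rmorph1 rmorphM rmorph_nat.
Qed.

Lemma rtQ_root p x : rtQ p x ^+ sval p = (1 - (sval p)%:R^-1 * (sval p)%:R) * x.
Proof. by rewrite /rtQ -lock -{2}[x]reprK pi_r_root. Qed.

Lemma pi_r p a : pi (r p a) = rtQ p (pi a).
Proof. exact: weak_root_unique (svalP p) (pi_r_root p a) (rtQ_root p _). Qed.

Definition quotLF : LFAlg := ringLF (@GRing.inv quot) rtQ.

Lemma isHom_pi : isHom (fun a : ringLF s r => pi a : quotLF).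
Proof.
by do !split=> *; [apply: rmorphD | apply: rmorphM | apply: rmorphN
  | apply: rmorph0 | apply: rmorph1 | apply: pi_s | apply: pi_r].
Qed.

End Quotient.
End RegularRing.

Section SubdirectRepresentation.
Variables (A : LFAlg) (HA : inRCR_LF A).
Let HC : isComRing A := proj1 (proj1 HA).
Local Notation R := (ringOf HC).
Local Notation s := (star A : R -> R).
Local Notation r := (rt A : primeIdx -> R -> R).

Let mulsK (a : R) : a * a * s a = a.
Proof. by have [_ [starP _]] := HA; have [] := (starP a _).2 erefl. Qed.

Let s_weak_inv (a : R) : a * (s a * s a) = s a.
Proof. by have [_ [starP _]] := HA; have [] := (starP a _).2 erefl. Qed.

Let r_root p (a : R) :
  r p a ^+ sval p = (1 - s (sval p)%:R * (sval p)%:R) * a.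
Proof.
have [_ [starP rtP]] := HA.
move: ((exrootF_charIdem starP _ _ _).1 ((rtP p a _).2 erefl)).
by rewrite (powA_ringOf (HA := HC)) /charIdem (natA_ringOf HC).
Qed.

Lemma inRCR_LF_inICM : inICM A.
Proof.
pose I := {J : set R | maxIdeal s J}.
pose F (i : I) := quotLF r s_weak_inv (svalP i).
pose h (a : A) : prodLF F := fun i => \pi_(quot (svalP i)) (a : R).
exists I, F, h.
split=> [i|].
  exact: ringLF_ICField (rtQ_root s_weak_inv r_root (HJ := svalP i)).
split=> [|x y exy].
  by apply: isHom_tuple => i; exact: (isHom_pi s_weak_inv r_root (svalP i)).
have [//|xy] := pselect (x = y); exfalso.
have d0 : (x : R) - (y : R) != 0 by rewrite subr_eq0; apply/eqP.
have [J [HJ nJd]] := exists_maxIdeal mulsK d0.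
(* [svalP] is opaque, so [quot HJ] and [quot (svalP i)] are not convertible *)
pose i : I := exist _ J HJ.
by apply: nJd; apply/(quot_eqP (svalP i)); exact: (congr1 (fun f => f i) exy).
Qed.

End SubdirectRepresentation.

Theorem mainTheorem15 :
  (forall A : LFAlg, inPPExp A <-> inRCR_LF A) /\
  (forall A : LFAlg, inICM A <-> inRCR_LF A).
Proof.
split=> A; split.
- case=> B [h [HB [hom_h h_inj]]].
  by apply: (inRCR_LF_sep (h := fun _ : unit => h)) => // x y /(_ tt) /h_inj.
- by move=> HA; exists A, id.
- case=> I [F [h [HF [hom_h h_inj]]]].
  apply: (inRCR_LF_sep (h := fun i x => h x i)) => [i | x y hxy | i].
  + exact: isHom_comp (isHom_proj F i) hom_h.
  + exact/h_inj/functional_extensionality_dep.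
  + exact: inRCR_LF_ICField.
- exact: inRCR_LF_inICM.
Qed.
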